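(* Let $G=(V,E)$ be a connected graph, $\tau$ a set of types, $f:\tau\to\mathbb{Q}_{\ge1}$ a fitness function, and $\alpha\in\tau$. Let $\beta=\arg\min\{f(j):j\in\tau\setminus\{\alpha\}\}$ and $\tau'=\{\alpha,\beta\}$. Let $\Omega$ (resp. $\Omega'$) be the set of functions $V\to\tau$ (resp. $V\to\tau'$) and define $g:\Omega\to\Omega'$ by $g(S)(v)=\alpha$ if $S(v)=\alpha$ and $g(S)(v)=\beta$ otherwise. Then for every $M_0\in\Omega$, $\pi_\alpha(G,\tau,f,M_0)\le\pi_\alpha(G,\tau',f,g(M_0))$ (where on the right $f$ is restricted to $\tau'$).
   Context: For $G=(V,E)$, $N(v)$ is the neighbourhood of $v$. For a state $S:V\to\tau$ and $v,w\in V$, $S|_{v\to w}$ equals $S$ except $w$ gets type $S(v)$. The Moran process $M(G,\tau,f,M_0)$ is the Markov chain on states started at $M_0$ in which, given $M_t$, a vertex $v$ is chosen with probability $f(M_t(v))/\sum_{u\in V}f(M_t(u))$, then $w\in N(v)$ uniformly at random, and $M_{t+1}=M_t|_{v\to w}$. $\pi_j(G,\tau,f,M_0)$ is the probability that at some time every vertex has type $j$. *)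

From HB Require Import structures.
From mathcomp Require Import all_boot all_order all_algebra.
From mathcomp Require Import all_classical all_reals all_analysis.
Set Implicit Arguments. Unset Strict Implicit. Unset Printing Implicit Defensive.
Import Order.TTheory GRing.Theory Num.Theory numFieldNormedType.Exports.
Local Open Scope ring_scope.

Section Moran.
Variables (R : realType) (V T : finType) (e : rel V) (f : T -> rat).

Definition nbhd (v : V) : {set V} := [set w | e v w].

Definition upd (S : {ffun V -> T}) (v w : V) : {ffun V -> T} :=
  [ffun u => if u == w then S v else S u].

Definition totfit (S : {ffun V -> T}) : R := \sum_(u : V) ratr (f (S u)).

Definition moranP (S S' : {ffun V -> T}) : R :=
  \sum_(v : V) (ratr (f (S v)) / totfit S) *
    \sum_(w in nbhd v) (#|nbhd v|%:R^-1 * (S' == upd S v w)%:R).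

Definition mono (j : T) (S : {ffun V -> T}) : bool := [forall v, S v == j].

(* probability that, started at S, the chain is monochromatic of type j
   at some time t <= n *)
Fixpoint hitp (j : T) (n : nat) (S : {ffun V -> T}) : R :=
  if mono j S then 1 else
  match n with
  | 0 => 0
  | n'.+1 => \sum_(S' : {ffun V -> T}) moranP S S' * hitp j n' S'
  end.

(* pi_j(G,T,f,M0): probability that at some time every vertex has type j,
   i.e. the limit of the (nondecreasing, bounded) sequence hitp j n M0 *)
Definition fixprob (j : T) (M0 : {ffun V -> T}) : R :=
  limn (fun n => hitp j n M0).

End Moran.

Definition pairT (T : finType) (a b : T) := {j : T | j \in [:: a; b]}.

Lemma pairT_a (T : finType) (a b : T) : a \in [:: a; b].
Proof. by rewrite inE eqxx. Qed.
Lemma pairT_b (T : finType) (a b : T) : b \in [:: a; b].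
Proof. by rewrite !inE eqxx orbT. Qed.

Definition pa (T : finType) (a b : T) : pairT a b := exist _ a (pairT_a a b).
Definition pb (T : finType) (a b : T) : pairT a b := exist _ b (pairT_b a b).

Definition gmap (V T : finType) (a b : T) (S : {ffun V -> T})
  : {ffun V -> pairT a b} :=
  [ffun v => if S v == a then pa a b else pb a b].

(* Let h(S) be the probability that the two-type process on {alpha, beta}
   started at S reaches the all-alpha state. Then h is harmonic for that
   process and monotone in the set of alpha-vertices. In the many-type process
   a non-alpha vertex reproduces at least as often as its image beta does under
   g (as f(j) >= f(beta)), and each of its reproductions can only shrink the
   set of alpha-vertices; hence h o g is superharmonic for the many-type
   process, and it equals 1 on the all-alpha state. So h o g dominates every
   finite-horizon fixation probability of alpha, and thus their limit. Both
   properties of h are proved for the limit of a lazy version of the two-type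
   chain, which is at most its true fixation probability. *)

From HB Require Import structures.
From mathcomp Require Import all_boot all_order all_algebra.
From mathcomp Require Import all_classical all_reals all_analysis.
From mathcomp Require Import ring lra.
Import Order.TTheory GRing.Theory Num.Theory numFieldNormedType.Exports.
Local Open Scope ring_scope.
Set Implicit Arguments. Unset Strict Implicit.

Section NeighbourhoodAverage.
Variables (R : realType) (V : finType) (e : rel V).

Definition nbhd_avg (v : V) (g : V -> R) : R :=
  \sum_(w in nbhd e v) #|nbhd e v|%:R^-1 * g w.

Lemma nbhd_avg_cst v (c : R) :
  nbhd_avg v (fun=> c) = if nbhd e v == finset.set0 then 0 else c.
Proof.
rewrite /nbhd_avg sumr_const -cards_eq0; case: (posnP #|nbhd e v|) => [->|n_gt0].
  by rewrite mulr0n.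
by rewrite -mulrnAl -[X in X * c]mulr_natr mulVf ?mul1r // pnatr_eq0 -lt0n.
Qed.

Lemma le_nbhd_avg v (g g' : V -> R) :
  (forall w, g w <= g' w) -> nbhd_avg v g <= nbhd_avg v g'.
Proof. by move=> le_gg'; apply: ler_sum => w _; rewrite ler_wpM2l ?invr_ge0. Qed.

Lemma nbhd_avg_le v (g : V -> R) (c : R) :
  0 <= c -> (forall w, g w <= c) -> nbhd_avg v g <= c.
Proof.
move=> c_ge0 /(le_nbhd_avg v); rewrite nbhd_avg_cst => /le_trans; apply.
by case: ifP.
Qed.

Lemma nbhd_avg_ge v (g : V -> R) (c : R) :
  nbhd e v != finset.set0 -> (forall w, c <= g w) -> c <= nbhd_avg v g.
Proof. by move=> /negbTE N_v /(le_nbhd_avg v); rewrite nbhd_avg_cst N_v. Qed.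

Lemma nbhd_avg_ge0 v (g : V -> R) : (forall w, 0 <= g w) -> 0 <= nbhd_avg v g.
Proof. by move=> /(le_nbhd_avg v); rewrite nbhd_avg_cst if_same. Qed.

End NeighbourhoodAverage.

Section MoranChain.
Variables (R : realType) (V T : finType) (e : rel V) (f : T -> rat).
Hypothesis f_ge1 : forall j, 1 <= f j.
Local Notation state := {ffun V -> T}.
Local Notation totfit := (totfit R f).
Local Notation hitp := (hitp R e f).

Definition fit (S : state) (v : V) : R := ratr (f (S v)).

Definition fit_step (phi : state -> R) (S : state) : R :=
  \sum_v fit S v * nbhd_avg e v (fun w => phi (upd S v w)).

Lemma totfitE (S : state) : totfit S = \sum_v fit S v.
Proof. by []. Qed.

Lemma fit_ge1 (S : state) v : 1 <= fit S v.
Proof. by rewrite /fit -(rmorph1 (@ratr R)) ler_rat. Qed.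

Lemma fit_ge0 (S : state) v : 0 <= fit S v.
Proof. exact: le_trans ler01 (fit_ge1 S v). Qed.

Lemma nonmono_totfit_gt0 j (S : state) : ~~ mono j S -> 0 < totfit S.
Proof.
rewrite /mono negb_forall => /existsP[v _]; rewrite totfitE (bigD1 v) //=.
apply: lt_le_trans ltr01 (le_trans (fit_ge1 S v) _).
by rewrite lerDl sumr_ge0 // => u _; apply: fit_ge0.
Qed.

Lemma sum_moranP_mul (S : state) (phi : state -> R) :
  \sum_S' moranP R e f S S' * phi S' = fit_step phi S / totfit S.
Proof.
rewrite /moranP /fit_step /nbhd_avg.
under eq_bigr => S' _ do rewrite big_distrl /=.
rewrite exchange_big /= big_distrl /=; apply: eq_bigr => v _.
under eq_bigr => S' _ do rewrite -(mulrA (ratr _ / _)) big_distrl /=.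
rewrite -big_distrr /= exchange_big /= mulrAC /fit; congr (_ * _ * _).
apply: eq_bigr => w _; rewrite (bigD1 (upd S v w)) //= eqxx mulr1 big1 ?addr0 //.
by move=> S' /negbTE ->; rewrite mulr0 mul0r.
Qed.

Lemma hitpS j n (S : state) :
  hitp j n.+1 S = if mono j S then 1 else fit_step (hitp j n) S / totfit S.
Proof. by rewrite /= sum_moranP_mul. Qed.

Lemma le_fit_step (phi psi : state -> R) S :
  (forall X, phi X <= psi X) -> fit_step phi S <= fit_step psi S.
Proof.
move=> le_phi; apply: ler_sum => v _; rewrite ler_wpM2l ?fit_ge0 //.
exact: le_nbhd_avg.
Qed.

Lemma fit_step_ge0 (phi : state -> R) S :
  (forall X, 0 <= phi X) -> 0 <= fit_step phi S.
Proof.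
move=> phi_ge0; apply: sumr_ge0 => v _.
by rewrite mulr_ge0 ?fit_ge0 ?nbhd_avg_ge0.
Qed.

Lemma fit_step_le_totfit (phi : state -> R) S :
  (forall X, phi X <= 1) -> fit_step phi S <= totfit S.
Proof.
move=> phi_le1; rewrite totfitE; apply: ler_sum => v _.
by rewrite ler_piMr ?fit_ge0 ?nbhd_avg_le.
Qed.

Lemma fit_stepB (phi : state -> R) S (c : R) :
  fit_step phi S - totfit S * c =
  \sum_v fit S v * (nbhd_avg e v (fun w => phi (upd S v w)) - c).
Proof.
rewrite totfitE big_distrl -sumrB; apply: eq_bigr => v _; exact/esym/mulrBr.
Qed.

Lemma hitp_in01 j n (S : state) : 0 <= hitp j n S <= 1.
Proof.
elim: n S => [|n IHn] S; first by rewrite /=; case: mono; rewrite ?ler01 ?lexx.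
have [phi_ge0 phi_le1] : (forall X, 0 <= hitp j n X) /\ (forall X, hitp j n X <= 1).
  by split=> X; case/andP: (IHn X).
rewrite hitpS; case: ifPn => [_|/nonmono_totfit_gt0 F_gt0]; first by rewrite ler01 lexx.
rewrite divr_ge0 ?fit_step_ge0 ?(ltW F_gt0) //=.
by rewrite ler_pdivrMr // mul1r fit_step_le_totfit.
Qed.

Lemma hitp_leS j n (S : state) : hitp j n S <= hitp j n.+1 S.
Proof.
elim: n S => [|n IHn] S.
  rewrite hitpS /=; case: ifPn => // /nonmono_totfit_gt0 F_gt0.
  by rewrite divr_ge0 ?fit_step_ge0 ?(ltW F_gt0) // => X; case/andP: (hitp_in01 j 0 X).
rewrite [hitp j n.+2 S]hitpS hitpS; case: ifPn => // /nonmono_totfit_gt0 F_gt0.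
by rewrite ler_pM2r ?invr_gt0 // le_fit_step.
Qed.

Lemma hitp_cvg j (S : state) : cvgn (hitp j ^~ S).
Proof.
apply: nondecreasing_is_cvgn; first by apply/nondecreasing_seqP => n; exact: hitp_leS.
by exists 1 => _ [n _ <-]; case/andP: (hitp_in01 j n S).
Qed.

Definition fit_bound : R := \sum_(v : V) \sum_(j : T) ratr (f j) + 1.

Lemma fit_bound_gt0 : 0 < fit_bound.
Proof.
rewrite ltr_wpDl ?ltr01 // sumr_ge0 // => v _; rewrite sumr_ge0 // => j _.
by rewrite ler0q (le_trans ler01).
Qed.

Lemma totfit_le_bound (S : state) : totfit S <= fit_bound.
Proof.
rewrite totfitE ler_wpDr ?ler01 // ler_sum // => v _.
rewrite (bigD1 (S v)) //= lerDl sumr_ge0 // => j _.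
by rewrite ler0q (le_trans ler01).
Qed.

(* Because its normaliser [fit_bound] does not
   depend on the state, its hitting probabilities can be compared state by
   state in the two-type case ([lazy_hitp_a_le]); for [hitp], normalised by
   [totfit S], this induction does not go through. *)
Fixpoint lazy_hitp (j : T) (n : nat) (S : state) : R :=
  if mono j S then 1 else
  match n with
  | 0 => 0
  | n'.+1 => fit_step (lazy_hitp j n') S / fit_bound
             + (1 - totfit S / fit_bound) * lazy_hitp j n' S
  end.

Lemma lazy_hitpS j n (S : state) : lazy_hitp j n.+1 S =
  if mono j S then 1 else
  fit_step (lazy_hitp j n) S / fit_bound + (1 - totfit S / fit_bound) * lazy_hitp j n S.
Proof. by []. Qed.

Lemma stay_prob_ge0 (S : state) : 0 <= 1 - totfit S / fit_bound.
Proof. by rewrite subr_ge0 ler_pdivrMr ?fit_bound_gt0 // mul1r totfit_le_bound. Qed.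

Lemma lazy_hitp_in01 j n (S : state) : 0 <= lazy_hitp j n S <= 1.
Proof.
elim: n S => [|n IHn] S; first by rewrite /=; case: mono; rewrite ?ler01 ?lexx.
have [phi_ge0 phi_le1] :
    (forall X, 0 <= lazy_hitp j n X) /\ (forall X, lazy_hitp j n X <= 1).
  by split=> X; case/andP: (IHn X).
rewrite lazy_hitpS; case: ifP => _; first by rewrite ler01 lexx.
have C_gt0 := fit_bound_gt0; have stay_ge0 := stay_prob_ge0 S.
rewrite addr_ge0 ?mulr_ge0 ?fit_step_ge0 ?invr_ge0 ?(ltW C_gt0) //=.
rewrite -[leRHS](subrK (totfit S / fit_bound)) addrC lerD ?ler_piMr //.
by rewrite ler_pM2r ?invr_gt0 // fit_step_le_totfit.
Qed.

Lemma lazy_hitp_leSS j n m (S : state) :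
  (forall X, lazy_hitp j n X <= lazy_hitp j m X) ->
  lazy_hitp j n.+1 S <= lazy_hitp j m.+1 S.
Proof.
move=> le_nm; rewrite !lazy_hitpS; case: ifP => // _.
rewrite lerD ?ler_wpM2l ?stay_prob_ge0 //.
by rewrite ler_pM2r ?invr_gt0 ?fit_bound_gt0 // le_fit_step.
Qed.

Lemma lazy_hitp_leS j n (S : state) : lazy_hitp j n S <= lazy_hitp j n.+1 S.
Proof.
elim: n S => [|n IHn] S; last exact: lazy_hitp_leSS.
by have := lazy_hitp_in01 j 1 S; rewrite lazy_hitpS /=; case: ifP => // _ /andP[].
Qed.

Lemma lazy_hitp_cvg j (S : state) : cvgn (lazy_hitp j ^~ S).
Proof.
apply: nondecreasing_is_cvgn.
  by apply/nondecreasing_seqP => n; exact: lazy_hitp_leS.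
by exists 1 => _ [n _ <-]; case/andP: (lazy_hitp_in01 j n S).
Qed.

Lemma lazy_hitp_le_hitp j n (S : state) : lazy_hitp j n S <= hitp j n S.
Proof.
elim: n S => [//|n IHn] S.
rewrite lazy_hitpS hitpS; case: ifPn => // S_nmono.
have F_gt0 := nonmono_totfit_gt0 S_nmono; have C_gt0 := fit_bound_gt0.
set F := totfit S; set C := fit_bound; set x := fit_step (hitp j n) S.
have -> : x / F = x / C + (1 - F / C) * (x / F).
  by field; rewrite !lt0r_neq0.
rewrite lerD ?ler_pM2r ?invr_gt0 ?le_fit_step // ler_wpM2l ?stay_prob_ge0 //.
have -> : x / F = hitp j n.+1 S by rewrite hitpS (negbTE S_nmono).
exact: le_trans (IHn S) (hitp_leS j n S).
Qed.

Definition lazy_fixprob (j : T) (S : state) : R := limn (lazy_hitp j ^~ S).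

Lemma fit_step_lazy_cvg j (S : state) :
  (fit_step (lazy_hitp j n) S @[n --> \oo] --> fit_step (lazy_fixprob j) S)%classic.
Proof.
apply: cvg_big => [|v _]; first exact: add_continuous.
apply: cvgM; first exact: cvg_cst.
apply: cvg_big => [|w _]; first exact: add_continuous.
by apply: cvgM; [exact: cvg_cst | exact: lazy_hitp_cvg].
Qed.

Lemma lazy_fixprob_harmonic j (S : state) : ~~ mono j S ->
  fit_step (lazy_fixprob j) S = totfit S * lazy_fixprob j S.
Proof.
move=> S_nmono; set h := lazy_fixprob j S; set F := totfit S.
have lim_shift : (lazy_hitp j n.+1 S @[n --> \oo] --> h)%classic.
  by rewrite (cvg_shiftS (lazy_hitp j ^~ S)); exact: lazy_hitp_cvg.
have lim_step : (lazy_hitp j n.+1 S @[n --> \oo] -->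
    fit_step (lazy_fixprob j) S / fit_bound + (1 - F / fit_bound) * h)%classic.
  under eq_fun => n do rewrite lazy_hitpS (negbTE S_nmono).
  by apply: cvgD; apply: cvgM;
    [exact: fit_step_lazy_cvg | exact: cvg_cst | exact: cvg_cst | exact: lazy_hitp_cvg].
have := norm_cvg_unique lim_shift lim_step; have := fit_bound_gt0.
move: (fit_step _ S) => s C_gt0 h_eq.
have C_neq0 : fit_bound != 0 by exact: lt0r_neq0.
apply: (mulIf (invr_neq0 C_neq0)); rewrite -[s / _](addrK ((1 - F / fit_bound) * h)).
by rewrite -h_eq; field.
Qed.

Lemma lazy_fixprob_mono j (S : state) : mono j S -> lazy_fixprob j S = 1.
Proof.
move=> S_mono; rewrite /lazy_fixprob (_ : lazy_hitp j ^~ S = fun=> 1) ?lim_cst //.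
by apply: funext => -[|n] /=; rewrite S_mono.
Qed.

Lemma lazy_fixprob_ge0 j (S : state) : 0 <= lazy_fixprob j S.
Proof.
apply: limr_ge; first exact: lazy_hitp_cvg.
by apply: nearW => n; case/andP: (lazy_hitp_in01 j n S).
Qed.

Lemma lazy_fixprob_le_fixprob j (S : state) : lazy_fixprob j S <= fixprob R e f j S.
Proof.
apply: ler_lim; [exact: lazy_hitp_cvg | exact: hitp_cvg |].
by apply: nearW => n; exact: lazy_hitp_le_hitp.
Qed.

Lemma hitp_isolated j n (S : state) :
  (forall v, nbhd e v = finset.set0) -> hitp j n S = (mono j S)%:R.
Proof.
move=> N_0; case: n => [|n]; rewrite ?hitpS /=; case: mono => //.
rewrite /fit_step big1 ?mul0r // => v _.
by rewrite /nbhd_avg N_0 big_set0 mulr0.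
Qed.

Lemma fixprob_isolated j (S : state) :
  (forall v, nbhd e v = finset.set0) -> fixprob R e f j S = (mono j S)%:R.
Proof.
move=> N_0; rewrite /fixprob (_ : hitp j ^~ S = fun=> (mono j S)%:R) ?lim_cst //.
by apply: funext => n; exact: hitp_isolated.
Qed.

End MoranChain.

Section TwoTypes.
Variables (R : realType) (V T : finType) (e : rel V) (f : T -> rat) (a b : T).
Hypothesis f_ge1 : forall j, 1 <= f j.
Hypothesis two_types : forall j : T, j = a \/ j = b.
Hypothesis no_isolated : forall v, nbhd e v != finset.set0.
Local Notation state := {ffun V -> T}.
Local Notation lazy_hitp := (lazy_hitp R e f a).
Local Notation fit_bound := (fit_bound R V f).

Definition a_le (A B : state) := forall v, A v = a -> B v = a.

Lemma mono_a_le (A B : state) : a_le A B -> mono a A -> mono a B.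
Proof. by move=> le_AB /forallP A_a; apply/forallP => v; apply/eqP/le_AB/eqP. Qed.

Lemma a_le_upd (A B : state) v w :
  a_le A B -> A v = B v -> a_le (upd A v w) (upd B v w).
Proof.
by move=> le_AB Av_Bv u; rewrite !ffunE; case: ifP => _; [rewrite Av_Bv | apply: le_AB].
Qed.

Lemma upd_a_le (A : state) v w : A v != a -> a_le (upd A v w) A.
Proof.
by move=> Av_a u; rewrite ffunE; case: ifP => // _ /eqP; rewrite (negbTE Av_a).
Qed.

Lemma a_le_upd_a (B : state) v w : B v = a -> a_le B (upd B v w).
Proof. by move=> Bv_a u; rewrite ffunE; case: ifP. Qed.

(* Vertex by vertex: where [A] and [B] agree the neighbour averages are
   ordered by monotonicity of [phi]; where they differ, [A v = b] can only
   lower [phi] below [phi B] and [B v = a] can only raise it above. *)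
Lemma fit_step_sub_a_le (phi : state -> R) (A B : state) :
  (forall X, 0 <= phi X) -> (forall X Y, a_le X Y -> phi X <= phi Y) ->
  a_le A B ->
  fit_step e f phi A - totfit R f A * phi B <=
  fit_step e f phi B - totfit R f B * phi B.
Proof.
move=> phi_ge0 phi_mono le_AB; rewrite !fit_stepB; apply: ler_sum => v _.
have [Av_Bv|Av_neq] := eqVneq (A v) (B v).
  rewrite /fit Av_Bv ler_wpM2l ?ler0q ?(le_trans ler01) // lerB //.
  by apply: le_nbhd_avg => w; apply/phi_mono/a_le_upd.
have Av_na : A v != a by apply: contra_neq Av_neq => Av_a; rewrite Av_a le_AB.
have Bv_a : B v = a.
  case: (two_types (B v)) => // Bv_b; case: (two_types (A v)) => Av_b.
    by rewrite Av_b eqxx in Av_na.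
  by rewrite Av_b Bv_b eqxx in Av_neq.
apply: (@le_trans _ _ 0).
  rewrite mulr_ge0_le0 ?fit_ge0 // subr_le0 (le_trans _ (phi_mono _ _ le_AB)) //.
  by apply: nbhd_avg_le => // w; apply/phi_mono/upd_a_le.
rewrite mulr_ge0 ?fit_ge0 // subr_ge0.
by apply: nbhd_avg_ge => // w; apply/phi_mono/a_le_upd_a.
Qed.

Lemma lazy_hitp_a_le n (A B : state) : a_le A B -> lazy_hitp n A <= lazy_hitp n B.
Proof.
elim: n A B => [|n IHn] A B le_AB.
  rewrite /=; case: ifP => [/(mono_a_le le_AB) -> // | _].
  by case: mono; rewrite ?ler01.
have [B_mono|B_nmono] := boolP (mono a B).
  by rewrite [leRHS]lazy_hitpS B_mono; case/andP: (lazy_hitp_in01 R e f_ge1 a n.+1 A).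
have A_nmono : ~~ mono a A by apply: contra B_nmono; exact: mono_a_le.
rewrite !lazy_hitpS (negbTE A_nmono) (negbTE B_nmono).
have phi_ge0 X : 0 <= lazy_hitp n X by case/andP: (lazy_hitp_in01 R e f_ge1 a n X).
have key := fit_step_sub_a_le phi_ge0 IHn le_AB.
have C_gt0 := fit_bound_gt0 R V f_ge1.
move: key; set C := fit_bound; set FA := totfit R f A.
set FB := totfit R f B; set sA := fit_step _ _ _ A; set sB := fit_step _ _ _ B.
set pA := lazy_hitp n A; set pB := lazy_hitp n B => key.
have C_neq0 : C != 0 by exact: lt0r_neq0.
have -> : sA / C + (1 - FA / C) * pA = (sA + (C - FA) * pA) / C by field.
have -> : sB / C + (1 - FB / C) * pB = (sB + (C - FB) * pB) / C by field.
rewrite ler_pM2r ?invr_gt0 //.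
have : (C - FA) * pA <= (C - FA) * pB.
  by rewrite ler_wpM2l ?IHn // subr_ge0 totfit_le_bound.
lra.
Qed.

Lemma lazy_fixprob_a_le (A B : state) :
  a_le A B -> lazy_fixprob R e f a A <= lazy_fixprob R e f a B.
Proof.
move=> le_AB; apply: ler_lim; [exact: lazy_hitp_cvg | exact: lazy_hitp_cvg |].
by apply: nearW => n; exact: lazy_hitp_a_le.
Qed.

End TwoTypes.

Section Reduction.
Variables (R : realType) (V T : finType) (e : rel V) (f : T -> rat) (a b : T).
Hypothesis f_ge1 : forall j, 1 <= f j.
Hypothesis b_neq_a : b != a.
Hypothesis b_min : forall j, j != a -> f b <= f j.
Hypothesis no_isolated : forall v, nbhd e v != finset.set0.
Local Notation state := {ffun V -> T}.
Local Notation f2 := (fun j : pairT a b => f (val j)).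
Local Notation h := (lazy_fixprob R e f2 (pa a b)).

Lemma f2_ge1 (j : pairT a b) : 1 <= f2 j.
Proof. exact: f_ge1. Qed.

Lemma pairT_cases (j : pairT a b) : j = pa a b \/ j = pb a b.
Proof.
case: j => x x_ab; have := x_ab; rewrite !inE => /orP[] /eqP x_eq;
  [left | right]; exact: val_inj.
Qed.

Lemma pa_neq_pb : pa a b != pb a b.
Proof. by apply: contra_neq b_neq_a => /(congr1 val). Qed.

Lemma gmap_upd (S : state) v w : gmap a b (upd S v w) = upd (gmap a b S) v w.
Proof. by apply/ffunP => u; rewrite !ffunE; case: (u == w). Qed.

Lemma mono_gmap (S : state) : mono (pa a b) (gmap a b S) = mono a S.
Proof.
apply: eq_forallb => v; rewrite ffunE; case: ifP => _; first by rewrite !eqxx.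
by rewrite eq_sym (negbTE pa_neq_pb).
Qed.

Lemma lazy_fixprob_gmap_superharmonic (S : state) : ~~ mono a S ->
  fit_step e f (fun X => h (gmap a b X)) S <= totfit R f S * h (gmap a b S).
Proof.
move=> S_nmono; set A := gmap a b S.
have h_harm : fit_step e f2 h A - totfit R f2 A * h A = 0.
  by rewrite lazy_fixprob_harmonic ?subrr ?mono_gmap //; exact: f2_ge1.
rewrite -subr_le0 -h_harm !fit_stepB; apply: ler_sum => v _.
under eq_fun => w do rewrite gmap_upd.
have [Sv_a|Sv_na] := eqVneq (S v) a.
  by rewrite /fit /A ffunE Sv_a eqxx.
have Av_b : A v = pb a b by rewrite /A ffunE (negbTE Sv_na).
rewrite ler_wnM2r ?subr_le0 //; last by rewrite /fit Av_b ler_rat b_min.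
apply: nbhd_avg_le => [|w]; first exact: lazy_fixprob_ge0.
apply: (lazy_fixprob_a_le R f2_ge1 pairT_cases no_isolated).
by apply: upd_a_le; rewrite Av_b eq_sym pa_neq_pb.
Qed.

Lemma hitp_le_lazy_fixprob_gmap n (S : state) : hitp R e f a n S <= h (gmap a b S).
Proof.
elim: n S => [|n IHn] S; rewrite ?hitpS /=; case: ifPn => [S_mono|S_nmono].
- by rewrite lazy_fixprob_mono // mono_gmap.
- exact: lazy_fixprob_ge0.
- by rewrite lazy_fixprob_mono // mono_gmap.
rewrite ler_pdivrMr ?(nonmono_totfit_gt0 R f_ge1 S_nmono) // mulrC.
apply: le_trans (lazy_fixprob_gmap_superharmonic S_nmono); exact: le_fit_step.
Qed.

Lemma fixprob_le_fixprob_gmap (M0 : state) :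
  fixprob R e f a M0 <= fixprob R e f2 (pa a b) (gmap a b M0).
Proof.
apply: le_trans (lazy_fixprob_le_fixprob R e f2_ge1 _ _).
apply: limr_le; first exact: hitp_cvg.
by apply: nearW => n; exact: hitp_le_lazy_fixprob_gmap.
Qed.

End Reduction.

Lemma connect_isolated (V : finType) (e : rel V) (x y : V) :
  nbhd e x = finset.set0 -> connect e x y -> y = x.
Proof.
move=> N_x /connectP[[|z p] /= path_p ->] //.
by case/andP: path_p => e_xz _; have := finset.in_set0 z; rewrite -N_x inE e_xz.
Qed.

Theorem corollary21 (R : realType) (V : finType) (e : rel V) (T : finType)
  (f : T -> rat) (alpha beta : T)
  (e_sym : symmetric e) (e_irr : irreflexive e)
  (G_conn : forall x y : V, connect e x y)
  (f_ge1 : forall j : T, 1 <= f j)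
  (beta_ne : beta != alpha)
  (beta_min : forall j : T, j != alpha -> f beta <= f j)
  (M0 : {ffun V -> T}) :
  fixprob R e f alpha M0 <=
  fixprob R e (fun j : pairT alpha beta => f (val j)) (pa alpha beta)
    (gmap alpha beta M0).
Proof.
have [no_isolated|] := boolP [forall v, nbhd e v != finset.set0].
  by apply: fixprob_le_fixprob_gmap => //; exact/forallP.
rewrite negb_forall => /existsP[x /negPn /eqP N_x].
have N_0 v : nbhd e v = finset.set0 by rewrite (connect_isolated N_x (G_conn x v)).
by rewrite !fixprob_isolated // mono_gmap.
Qed.
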